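(* Let $\lambda_1\ge\lambda_2\ge\dots\ge\lambda_p\ge0$ satisfy $3\lambda_1^2\le\Lambda^2:=\sum_{j=1}^p\lambda_j^2$, and define $h_j(t)=(1+\lambda_j^2t^2)^{-1/4}$ for $j=1,\dots,p$. Then \[ \int_0^\infty\prod_{j=1}^p h_j(t)\,dt\le\frac{C}{\Lambda} \] for an absolute constant $C$. *)

From HB Require Import structures.
From mathcomp Require Import all_boot all_order all_algebra.
From mathcomp Require Import all_classical all_reals all_analysis.
Set Implicit Arguments. Unset Strict Implicit. Unset Printing Implicit Defensive.
Import Order.TTheory GRing.Theory Num.Theory.
Local Open Scope ring_scope.

Definition hfun {R : realType} (l t : R) : R :=
  (1 + l ^+ 2 * t ^+ 2) `^ (- (1 / 4)).

Definition prodh {R : realType} (p : nat) (lam : 'I_p -> R) (t : R) : R :=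
  \prod_(j < p) hfun (lam j) t.

Definition bigLam {R : realType} (p : nat) (lam : 'I_p -> R) : R :=
  Num.sqrt (\sum_(j < p) lam j ^+ 2).

From HB Require Import structures.
From mathcomp Require Import all_boot all_order all_algebra.
From mathcomp Require Import all_classical all_reals all_analysis.
From mathcomp Require Import ring lra measurable_realfun.
Import Order.TTheory GRing.Theory Num.Theory.
Import numFieldNormedType.Exports.
Local Open Scope ring_scope.
Local Open Scope classical_set_scope.

(* With B := Λ²t²/3, every λ_j²t² lies in [0, B] since 3 λ_1² <= Λ², so
   the concavity of ln (1 + _) on [0, B] gives
   ln (1 + λ_j²t²) >= (λ_j²t²/B) ln (1 + B).
   Summing over j, Σ_j ln (1 + λ_j²t²) >= 3 ln (1 + B), that is
   ∏_j h_j(t) <= (1 + Λ²t²/3)^(-3/4) <= 2 (1 + Λt/2)^(-3/2), and the last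
   function has integral 8/Λ over [0, +oo). *)

Section product_decay.
Variable R : realType.

Lemma ln1D_ge_chord (a B : R) : 0 <= a <= B -> a / B * ln (1 + B) <= ln (1 + a).
Proof.
move=> /andP[a0 aB].
have [B0|B0] := eqVneq B 0.
  have -> : a = 0 by apply/le_anti; rewrite a0 -B0 aB.
  by rewrite !mul0r addr0 ln1.
have B_gt0 : 0 < B by rewrite lt_def B0 (le_trans a0 aB).
have th0 : 0 <= a / B by rewrite divr_ge0 // ltW.
have th1 : a / B <= 1 by rewrite ler_pdivrMr // mul1r.
have := @concave_ln R (Itv01 th0 th1) (1 + B) 1.
rewrite !convRE /= ln1 mulr0 addr0 mulr1 /unstable.onem.
have -> : a / B * (1 + B) + (1 - a / B) = 1 + a by field.
by apply; rewrite ?ltr01 // ltr_wpDr // ltW.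
Qed.

Lemma sum_ln1D_ge {I : finType} {a : I -> R} {B : R} :
  (forall i, 0 <= a i <= B) ->
  (\sum_i a i) / B * ln (1 + B) <= \sum_i ln (1 + a i).
Proof.
move=> aB; rewrite !mulr_suml; apply: ler_sum => i _; exact: ln1D_ge_chord.
Qed.

Lemma bigLam_sqr p (lam : 'I_p -> R) : bigLam lam ^+ 2 = \sum_j lam j ^+ 2.
Proof. by rewrite sqr_sqrtr // sumr_ge0 // => j _; rewrite sqr_ge0. Qed.

Lemma hfunE (l t : R) : hfun l t = expR (- (1 / 4) * ln (1 + l ^+ 2 * t ^+ 2)).
Proof. by rewrite /hfun /powR gt_eqF // ltr_wpDr // mulr_ge0 // sqr_ge0. Qed.

Lemma prodh_le_powR p (lam : 'I_p -> R) (M t : R) :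
  0 <= M -> (forall j, lam j ^+ 2 <= M) ->
  prodh lam t <= (1 + M * t ^+ 2) `^ (- (bigLam lam ^+ 2 / (4 * M))).
Proof.
move=> M0 lamM.
have [->|t0] := eqVneq t 0.
  rewrite /prodh expr0n mulr0 addr0 powR1 big1 // => j _.
  by rewrite /hfun expr0n mulr0 addr0 powR1.
have Mt2_ge0 : 0 <= M * t ^+ 2 by rewrite mulr_ge0 // sqr_ge0.
have lam_t2_le j : 0 <= lam j ^+ 2 * t ^+ 2 <= M * t ^+ 2.
  by rewrite mulr_ge0 ?sqr_ge0 // ler_wpM2r ?sqr_ge0.
have := sum_ln1D_ge lam_t2_le; rewrite -mulr_suml -bigLam_sqr.
have -> : bigLam lam ^+ 2 * t ^+ 2 / (M * t ^+ 2) = bigLam lam ^+ 2 / M.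
  by rewrite invfM mulrACA divff ?mulr1 // expf_neq0.
move=> sum_ln_ge.
rewrite /powR gt_eqF ?ltr_wpDr // /prodh (eq_bigr _ (fun j _ => hfunE (lam j) t)).
rewrite -expR_sum ler_expR -mulr_sumr invfM.
lra.
Qed.

Lemma powR_quadratic_le_linear (u : R) : 0 <= u ->
  (1 + 4 / 3 * u ^+ 2) `^ (- (3 / 4)) <= 2 * (1 + u) `^ (- (3 / 2)).
Proof.
move=> u0.
have quad_gt0 : 0 < 1 + 4 / 3 * u ^+ 2 by rewrite ltr_wpDr // mulr_ge0 // sqr_ge0.
have lin_gt0 : 0 < 1 + u by rewrite ltr_wpDr.
have sqr_le : (1 + u) ^+ 2 <= 2 * (1 + 4 / 3 * u ^+ 2).
  have := sqr_ge0 (1 - u); have := sqr_ge0 u; nra.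
have ln_sqr_le : 2 * ln (1 + u) <= ln 2 + ln (1 + 4 / 3 * u ^+ 2).
  rewrite -lnM ?posrE // mulr_natl -lnXn // ler_ln ?posrE ?mulr_gt0 ?exprn_gt0 //.
have ln2_ge0 : 0 <= ln (2 : R) by rewrite ln_ge0 // ler1n.
rewrite /powR !gt_eqF // -[X in X * expR _]lnK ?posrE // -expRD ler_expR.
(* the factor 2 absorbs the 2^(3/4) lost in taking the (3/4)-th power *)
lra.
Qed.

Lemma cvgy_powR_affine (s q : R) : 0 < s -> 0 < q ->
  (1 + s * x) `^ (- q) @[x --> +oo] --> 0.
Proof.
move=> s0 q0.
under eq_fun do rewrite powRN.
apply/gtr0_cvgV0.
  near=> x.
  have x_ge0 : 0 <= x by near: x; apply: nbhs_pinfty_ge; rewrite num_real.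
  by rewrite powR_gt0 // ltr_wpDr // mulr_ge0 // ltW.
apply/cvgryPge => A; near=> x.
set m := Num.max A 1.
have m_ge0 : 0 <= m by rewrite le_max ler01 orbT.
have m_root : (m `^ q^-1) `^ q = m by rewrite -powRrM mulVf ?gt_eqF // powRr1.
have x_ge : m `^ q^-1 / s <= x.
  by near: x; apply: nbhs_pinfty_ge; rewrite num_real.
have sx_ge : m `^ q^-1 <= s * x by rewrite mulrC -ler_pdivrMr.
have sx_ge0 : 0 <= s * x := le_trans (powR_ge0 _ _) sx_ge.
apply: (@le_trans _ _ m); first by rewrite le_max lexx.
rewrite -[leLHS]m_root ge0_ler_powR ?nnegrE ?powR_ge0 ?addr_ge0 ?(ltW q0) //.
by rewrite (le_trans sx_ge) // lerDr.
Unshelve. all: by end_near.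
Qed.

Lemma is_derive_powR_affine (s r x : R) : 0 < 1 + s * x ->
  is_derive x 1 (fun y => (1 + s * y) `^ r) (r * (1 + s * x) `^ (r - 1) * s).
Proof.
move=> pos.
have d_affine : is_derive x 1 (fun y : R => 1 + s * y) s.
  by apply: is_derive_eq; rewrite add0r mul1r; exact: mulr1.
exact: (is_derive1_comp (g := fun y => 1 + s * y)
  (is_derive1_powR r pos) d_affine).
Qed.

Lemma integral_powR_affine (s r : R) : 0 < s -> 1 < r ->
  (\int[lebesgue_measure]_(x in `[0%R, +oo[) ((1 + s * x) `^ (- r))%:E =
     ((s * (r - 1))^-1)%:E)%E.
Proof.
move=> s0 r1.
set c := (s * (r - 1))^-1.
pose f x := (1 + s * x) `^ (- r).
pose F x := - c * (1 + s * x) `^ (- (r - 1)).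
have affine_gt0 (x : R) : 0 <= x -> 0 < 1 + s * x.
  by move=> x0; rewrite ltr_wpDr // mulr_ge0 // ltW.
have df (x : R) : 0 <= x -> derivable f x 1.
  by move=> /affine_gt0 pos; case: (is_derive_powR_affine _ (- r) _ pos).
have dF (x : R) : 0 <= x -> is_derive x 1 F (f x).
  move=> /affine_gt0 pos.
  have -> : F = - c \*: (fun y => (1 + s * y) `^ (- (r - 1))) by [].
  apply: is_derive_eq.
    exact: (is_deriveZ (- c) (is_derive_powR_affine _ (- (r - 1)) _ pos)).
  rewrite /f /c (_ : - (r - 1) - 1 = - r); last by ring.
  by rewrite /GRing.scale /=; field; rewrite subr_eq0 !gt_eqF.
have cont_at_0 (g : R -> R) : derivable g 0 1 -> g x @[x --> 0^'+] --> g 0.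
  by move=> /derivable1_diffP/differentiable_continuous/cvg_at_right_filter.
rewrite (_ : (fun x => _) = fun x => (f x)%:E) //.
rewrite (@ge0_continuous_FTC2y R f F 0 0).
- by rewrite /F mulr0 addr0 powR1 mulr1 -EFinB sub0r opprK.
- by move=> x _; exact: powR_ge0.
- apply/continuous_within_itvcyP; split; last exact/cont_at_0/df.
  move=> x; rewrite in_itv /= andbT => /ltW x0.
  exact/differentiable_continuous/derivable1_diffP/df.
- rewrite -(mulr0 (- c)); apply: cvgMr.
  by apply: cvgy_powR_affine => //; rewrite subr_gt0.
- by move=> x /ltW /dF [].
- by apply: cont_at_0; case: (dF 0 (lexx 0)).
- move=> x; rewrite in_itv /= andbT => /ltW /dF dFx.
  by rewrite derive1E; case: dFx.
Qed.

Lemma prodh_le_majorant p (lam : 'I_p -> R) (t : R) :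
  (forall j, 3 * lam j ^+ 2 <= bigLam lam ^+ 2) -> 0 < bigLam lam -> 0 <= t ->
  prodh lam t <= 2 * (1 + bigLam lam / 2 * t) `^ (- (3 / 2)).
Proof.
set L := bigLam lam => lam_sqr_le3 L_gt0 t0.
have lam_sqr_le j : lam j ^+ 2 <= L ^+ 2 / 3.
  by rewrite ler_pdivlMr // mulrC lam_sqr_le3.
apply: le_trans (prodh_le_powR _ _ _ t _ lam_sqr_le) _.
  by rewrite divr_ge0 ?sqr_ge0.
have -> : L ^+ 2 / (4 * (L ^+ 2 / 3)) = 3 / 4 by field; rewrite gt_eqF.
have -> : 1 + L ^+ 2 / 3 * t ^+ 2 = 1 + 4 / 3 * (L / 2 * t) ^+ 2 by field.
by apply: powR_quadratic_le_linear; rewrite mulr_ge0 // divr_ge0 // ltW.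
Qed.

Lemma measurable_hfun (l : R) : measurable_fun [set: R] (hfun l).
Proof.
rewrite (_ : hfun l =
  @powR R ^~ (- (1 / 4)) \o (fun t => 1 + l ^+ 2 * t ^+ 2)) //.
apply: measurableT_comp => //.
by apply: measurable_funD => //; apply: measurable_funM.
Qed.

Lemma measurable_powR_affine (s r : R) :
  measurable_fun [set: R] (fun x => (1 + s * x) `^ r).
Proof.
rewrite (_ : (fun x => _) = @powR R ^~ r \o (fun x => 1 + s * x)) //.
apply: measurableT_comp => //.
by apply: measurable_funD => //; apply: measurable_funM.
Qed.

Lemma measurable_prodh p (lam : 'I_p -> R) : measurable_fun [set: R] (prodh lam).
Proof. by apply: measurable_prod => j _; exact: measurable_hfun. Qed.

End product_decay.

Theorem lemmaA2 (R : realType) :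
  exists C : R, 0 < C /\
  forall (n : nat) (lam : 'I_n.+1 -> R),
    (forall i, 0 <= lam i) ->
    (forall i j : 'I_n.+1, (i <= j)%N -> lam j <= lam i) ->
    3 * lam ord0 ^+ 2 <= bigLam lam ^+ 2 ->
    0 < bigLam lam ->
    (\int[lebesgue_measure]_(t in `[0%R, +oo[%classic) (prodh lam t)%:E <=
       (C / bigLam lam)%:E)%E.
Proof.
exists 8; split => // n lam lam_ge0 lam_antitone lam0_le L_gt0.
have lam_sqr_le3 j : 3 * lam j ^+ 2 <= bigLam lam ^+ 2.
  apply: le_trans lam0_le; rewrite ler_pM2l // ler_sqr ?nnegrE //.
  exact: lam_antitone.
pose g t := (1 + bigLam lam / 2 * t) `^ (- (3 / 2)).
have mg : measurable_fun [set: R] g := measurable_powR_affine _ _ _.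
apply: (@le_trans _ _
  (\int[lebesgue_measure]_(t in `[0%R, +oo[) (2%:E * (g t)%:E))%E).
  apply: ge0_le_integral => //.
  - by move=> t _; rewrite lee_fin; apply: prodr_ge0 => j _; exact: powR_ge0.
  - by apply/measurable_EFinP; apply: measurable_funTS; exact: measurable_prodh.
  - by apply: measurable_funeM; apply/measurable_EFinP; exact: measurable_funTS.
  - move=> t; rewrite /= in_itv /= andbT => t0.
    by rewrite -EFinM lee_fin prodh_le_majorant.
rewrite ge0_integralZl //; last 2 first.
- exact/measurable_EFinP/measurable_funTS.
- by move=> t _; rewrite lee_fin powR_ge0.
rewrite integral_powR_affine ?divr_gt0 //; last lra.
rewrite -EFinM lee_fin (_ : 2 / _ = 8 / bigLam lam) //.
by field; rewrite gt_eqF.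
Qed.
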